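(* Let $X=\{u_1x=v_1y,\ u_2z=v_2t,\ w^2+(x+z)(y+t)=0\}\subset\mathbb{P}^1\times\mathbb{P}^1\times\mathbb{P}^4$ and let $\mathbf{G}\subset\mathrm{Aut}(X)$ be the subgroup generated by $\Gamma$ and $\tau_1,\tau_2,\tau_3$. Then (1) $X$ has no $\mathbf{G}$-fixed points; (2) the only $\mathbf{G}$-invariant irreducible curves in $X$ are $C$ and $C'$.
   Context: Coordinates are $([u_1:v_1],[u_2:v_2],[x:y:z:t:w])$. $\tau_1\colon([u_1:v_1],[u_2:v_2],[x:y:z:t:w])\mapsto([v_1:u_1],[v_2:u_2],[y:x:t:z:w])$, $\tau_2\colon\mapsto([u_2:v_2],[u_1:v_1],[z:t:x:y:w])$, $\tau_3\colon\mapsto([u_1:v_1],[u_2:v_2],[x:y:z:t:-w])$. $\Gamma\cong\mathbb{C}^\ast$ consists of the automorphisms $([u_1:v_1],[u_2:v_2],[x:y:z:t:w])\mapsto([u_1/\lambda:\lambda v_1],[u_2/\lambda:\lambda v_2],[\lambda x:y/\lambda:\lambda z:t/\lambda:w])$, $\lambda\in\mathbb{C}^\ast$. $C=\{w=0,\ x+z=0,\ y+t=0,\ u_1z=v_1t,\ u_2z=v_2t,\ v_1u_2=u_1v_2\}$ is the singular curve of $X$, and $C'=X\cap\{x=z,\ t=y\}$. *)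

From HB Require Import structures.
From mathcomp Require Import all_boot all_order all_algebra.
From mathcomp Require Import reals.
From mathcomp Require Import complex.
From mathcomp Require Import mpoly.

Set Implicit Arguments.
Unset Strict Implicit.
Unset Printing Implicit Defensive.
Import Order.TTheory GRing.Theory Num.Theory.
Local Open Scope ring_scope.

(* A point of P^1 x P^1 x P^4 is represented by a vector v : 'I_9 -> K with
   coordinates (u1,v1,u2,v2,x,y,z,t,w) = (v 0, ..., v 8), such that each of
   the three blocks is nonzero; two representatives define the same point iff
   they differ by independent nonzero scalings of the three blocks. *)
Section Geometry.
Variable K : fieldType.

Definition crd (v : 'I_9 -> K) (k : nat) : K := v (inord k).

Definition nondeg (v : 'I_9 -> K) : Prop :=
  [/\ (crd v 0 != 0) || (crd v 1 != 0),
      (crd v 2 != 0) || (crd v 3 != 0) &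
      [|| crd v 4 != 0, crd v 5 != 0, crd v 6 != 0, crd v 7 != 0 | crd v 8 != 0]].

Definition blk (i : 'I_9) : nat := if (i < 2)%N then 0%N else if (i < 4)%N then 1%N else 2%N.

Definition peq (v v' : 'I_9 -> K) : Prop :=
  exists a b c : K, [/\ a != 0, b != 0, c != 0 &
    forall i : 'I_9, v' i = (if blk i == 0%N then a else if blk i == 1%N then b else c) * v i].

Definition pset := ('I_9 -> K) -> Prop.

Definition psubset (A B : pset) : Prop := forall v, A v -> B v.
Definition peqset (A B : pset) : Prop := forall v, A v <-> B v.
Definition pproper (A B : pset) : Prop := psubset A B /\ exists v, B v /\ ~ A v.

Definition multihom (p : {mpoly K[9]}) : Prop :=
  exists a b c : nat, forall m, m \in msupp p ->
    [/\ (m (inord 0) + m (inord 1))%N = a,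
        (m (inord 2) + m (inord 3))%N = b &
        (m (inord 4) + m (inord 5) + m (inord 6) + m (inord 7) + m (inord 8))%N = c].

Definition zclosed (Z : pset) : Prop :=
  exists S : {mpoly K[9]} -> Prop, (forall p, S p -> multihom p) /\
    forall v, Z v <-> (nondeg v /\ forall p, S p -> p.@[v] = 0).

Definition zirreducible (Z : pset) : Prop :=
  [/\ zclosed Z, exists v, Z v &
      forall Z1 Z2, zclosed Z1 -> zclosed Z2 ->
        psubset Z (fun v => Z1 v \/ Z2 v) -> psubset Z Z1 \/ psubset Z Z2].

(* irreducible curve: irreducible closed subset of (Krull) dimension 1, i.e.
   the longest chain of irreducible closed subsets ending at Z has length 1 *)
Definition irr_curve (Z : pset) : Prop :=
  [/\ zirreducible Z,
      exists Z0, zirreducible Z0 /\ pproper Z0 Z &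
      ~ exists Z0 Z1, [/\ zirreducible Z0, zirreducible Z1, pproper Z0 Z1 & pproper Z1 Z]].

Definition Xset : pset := fun v =>
  [/\ nondeg v,
      crd v 0 * crd v 4 = crd v 1 * crd v 5,
      crd v 2 * crd v 6 = crd v 3 * crd v 7 &
      crd v 8 ^+ 2 + (crd v 4 + crd v 6) * (crd v 5 + crd v 7) = 0].

Definition Cset : pset := fun v =>
  nondeg v /\
  [/\ crd v 8 = 0, crd v 4 + crd v 6 = 0 & crd v 5 + crd v 7 = 0] /\
  [/\ crd v 0 * crd v 6 = crd v 1 * crd v 7,
      crd v 2 * crd v 6 = crd v 3 * crd v 7 &
      crd v 1 * crd v 2 = crd v 0 * crd v 3].

Definition C'set : pset := fun v =>
  [/\ Xset v, crd v 4 = crd v 6 & crd v 7 = crd v 5].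

Definition permute (p : nat -> nat) (v : 'I_9 -> K) : 'I_9 -> K :=
  fun i => crd v (p i).

Definition tau1 := permute (fun i => nth 0%N [:: 1; 0; 3; 2; 5; 4; 7; 6; 8]%N i).
Definition tau2 := permute (fun i => nth 0%N [:: 2; 3; 0; 1; 6; 7; 4; 5; 8]%N i).
Definition tau3 (v : 'I_9 -> K) : 'I_9 -> K :=
  fun i => if val i == 8%N then - v i else v i.
Definition gamma (l : K) (v : 'I_9 -> K) : 'I_9 -> K :=
  fun i => nth 0 [:: l^-1; l; l^-1; l; l; l^-1; l; l^-1; 1] i * v i.

Definition generator (g : ('I_9 -> K) -> ('I_9 -> K)) : Prop :=
  [\/ g = tau1, g = tau2, g = tau3 | exists2 l : K, l != 0 & g = gamma l].

(* the group G generated by Gamma and tau1, tau2, tau3 (each generator has its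
   inverse among the generators, so the generated monoid is the group) *)
Inductive inG : (('I_9 -> K) -> ('I_9 -> K)) -> Prop :=
  | inG_id : inG id
  | inG_gen g : generator g -> inG g
  | inG_comp g h : inG g -> inG h -> inG (g \o h).

Definition G_fixed_point (v : 'I_9 -> K) : Prop :=
  Xset v /\ forall g, inG g -> peq v (g v).

Definition G_invariant (Z : pset) : Prop :=
  forall g, inG g -> forall v, nondeg v -> (Z (g v) <-> Z v).

End Geometry.

(* The one-parameter group Gamma moves every [u1:v1] with u1 v1 <> 0, and tau1 swaps its two
   fixed points [1:0] and [0:1]; hence G has no fixed point.
   A G-invariant irreducible curve Z lies in no hyperplane u_i = 0 or v_i = 0, because tau1
   exchanges u_i and v_i; so Z contains a point p with u1 v1 u2 v2 <> 0.  The closure of the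
   Gamma-orbit of p is an irreducible closed subset of Z strictly containing p, hence equal to
   Z since Z is a curve.  Along that orbit z/x is constant, so tau1 p and tau2 p satisfy
   z_p x = x_p z; these two conditions force p into C or C', and then Z is contained in, hence
   equal to, C or C'.  That C and C' are irreducible curves comes from covering each by two
   polynomial charts glued by s |-> 1/s: a proper irreducible closed subset meets a chart in
   the roots of a nonzero polynomial, so it is a single point. *)

From HB Require Import structures.
From mathcomp Require Import all_boot all_order all_algebra.
From mathcomp Require Import reals complex mpoly.
From mathcomp Require Import ring zify.
From Stdlib Require Import Classical FunctionalExtensionality PropExtensionality.

Set Implicit Arguments.
Unset Strict Implicit.
Unset Printing Implicit Defensive.
Import Order.TTheory GRing.Theory Num.Theory.
Local Open Scope ring_scope.

Section ProjectivePoints.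
Variable K : fieldType.
Implicit Types u v w : 'I_9 -> K.

Lemma ord9_ind (P : 'I_9 -> Prop) :
  P (inord 0) -> P (inord 1) -> P (inord 2) -> P (inord 3) -> P (inord 4) ->
  P (inord 5) -> P (inord 6) -> P (inord 7) -> P (inord 8) -> forall i, P i.
Proof.
move=> h0 h1 h2 h3 h4 h5 h6 h7 h8 i; rewrite -(inord_val i).
by case: i => [[|[|[|[|[|[|[|[|[|//]]]]]]]]] ?].
Qed.

Lemma peq_intro v w (a b c : K) : a != 0 -> b != 0 -> c != 0 ->
  crd w 0 = a * crd v 0 -> crd w 1 = a * crd v 1 ->
  crd w 2 = b * crd v 2 -> crd w 3 = b * crd v 3 ->
  crd w 4 = c * crd v 4 -> crd w 5 = c * crd v 5 -> crd w 6 = c * crd v 6 ->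
  crd w 7 = c * crd v 7 -> crd w 8 = c * crd v 8 -> peq v w.
Proof.
move=> ha hb hc e0 e1 e2 e3 e4 e5 e6 e7 e8; exists a, b, c; split => //.
by apply: ord9_ind; rewrite /blk inordK.
Qed.

Lemma peq_scales v w : peq v w -> exists a b c : K, [/\ a != 0, b != 0, c != 0 &
  forall k, (k < 9)%N -> crd w k = nth 0 [:: a; a; b; b; c; c; c; c; c] k * crd v k].
Proof.
move=> [a [b [c [ha hb hc h]]]]; exists a, b, c; split => // k hk.
rewrite /crd h /blk inordK //.
by case: k hk => [|[|[|[|[|[|[|[|[|//]]]]]]]]].
Qed.

Lemma peq_sym v w : peq v w -> peq w v.
Proof.
move=> /peq_scales [a [b [c [ha hb hc h]]]].
by apply: (peq_intro (invr_neq0 ha) (invr_neq0 hb) (invr_neq0 hc)); rewrite h //= mulKf.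
Qed.

Lemma peq_trans u v w : peq u v -> peq v w -> peq u w.
Proof.
move=> /peq_scales [a [b [c [ha hb hc h]]]] /peq_scales [a' [b' [c' [ha' hb' hc' h']]]].
apply: (peq_intro (mulf_neq0 ha' ha) (mulf_neq0 hb' hb) (mulf_neq0 hc' hc));
  by rewrite h' // h //= mulrA.
Qed.

Lemma peq_nondeg v w : peq v w -> nondeg v -> nondeg w.
Proof.
move=> /peq_scales [a [b [c [ha hb hc h]]]].
by rewrite /nondeg !h //= !mulf_eq0 (negbTE ha) (negbTE hb) (negbTE hc).
Qed.

End ProjectivePoints.

Section Multihomogeneous.
Variable K : fieldType.
Implicit Types (p q : {mpoly K[9]}) (v w : 'I_9 -> K).

Definition mhom (a b c : nat) p := forall m, m \in msupp p ->
  [/\ (m (inord 0) + m (inord 1))%N = a,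
      (m (inord 2) + m (inord 3))%N = b &
      (m (inord 4) + m (inord 5) + m (inord 6) + m (inord 7) + m (inord 8))%N = c].

Lemma mhom_multihom a b c p : mhom a b c p -> multihom p.
Proof. by exists a, b, c. Qed.

Lemma mhomD a b c p q : mhom a b c p -> mhom a b c q -> mhom a b c (p + q).
Proof. by move=> hp hq m /msuppD_le; rewrite mem_cat => /orP [/hp|/hq]. Qed.

Lemma mhomB a b c p q : mhom a b c p -> mhom a b c q -> mhom a b c (p - q).
Proof. by move=> hp hq m /msuppB_le; rewrite mem_cat => /orP [/hp|/hq]. Qed.

Lemma mhomZ a b c k p : mhom a b c p -> mhom a b c (k *: p).
Proof. by move=> hp m /msuppZ_le /hp. Qed.

Lemma mhomM a b c a' b' c' p q : mhom a b c p -> mhom a' b' c' q ->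
  mhom (a + a') (b + b') (c + c') (p * q).
Proof.
move=> hp hq m /msuppM_le /allpairsP [[m1 m2] [/= /hp [h1 h2 h3] /hq [h1' h2' h3'] ->]].
rewrite !mnmDE; split; lia.
Qed.

Lemma mhom1 : mhom 0 0 0 (1 : {mpoly K[9]}).
Proof. by move=> m; rewrite msupp1 inE => /eqP ->; rewrite !mnm0E. Qed.

Definition mcrd (k : nat) : {mpoly K[9]} := 'X_(inord k).

Lemma meval_mcrd v k : (mcrd k).@[v] = crd v k.
Proof. exact: mevalXU. Qed.

Lemma mhom_mcrd k : (k < 9)%N -> mhom (k < 2)%N ((1 < k) && (k < 4))%N (3 < k)%N (mcrd k).
Proof.
move=> hk m; rewrite msuppX inE => /eqP ->; rewrite !mnm1E.
rewrite -!val_eqE /= !inordK //.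
by case: k hk => [|[|[|[|[|[|[|[|[|//]]]]]]]]].
Qed.

Lemma multihomM p q : multihom p -> multihom q -> multihom (p * q).
Proof. by move=> [a [b [c hp]]] [a' [b' [c' hq]]]; exact: mhom_multihom (mhomM hp hq). Qed.

Lemma prod_ord9 (F : 'I_9 -> K) : \prod_(i < 9) F i =
  F (inord 0) * (F (inord 1) * (F (inord 2) * (F (inord 3) * (F (inord 4) *
  (F (inord 5) * (F (inord 6) * (F (inord 7) * F (inord 8)))))))).
Proof.
rewrite !big_ord_recl big_ord0 mulr1.
by repeat congr (_ * _); apply: congr1; apply: val_inj; rewrite /= inordK.
Qed.

Lemma meval_peq v w a b c p : peq v w -> mhom a b c p ->
  exists2 k : K, k != 0 & p.@[w] = k * p.@[v].
Proof.
move=> [x [y [z [hx hy hz h]]]] hp.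
exists (x ^+ a * y ^+ b * z ^+ c); first by rewrite !mulf_neq0 // expf_neq0.
rewrite !mevalE big_distrr /= !big_seq; apply: eq_bigr => m hm.
rewrite mulrCA; congr (_ * _).
under eq_bigr => i _ do rewrite h exprMn.
rewrite big_split /=; congr (_ * _).
have [<- <- <-] := hp m hm.
rewrite prod_ord9 /blk !inordK //= !exprD; ring.
Qed.

Lemma meval_peq_eq0 v w p : peq v w -> multihom p -> (p.@[v] = 0 <-> p.@[w] = 0).
Proof.
move=> hvw [a [b [c hp]]]; have [k hk ->] := meval_peq hvw hp.
by split => [->|/eqP]; rewrite ?mulr0 // mulf_eq0 (negbTE hk) => /eqP.
Qed.

End Multihomogeneous.

Section ZariskiClosure.
Variable K : fieldType.
Implicit Types (S Z : pset K) (p : {mpoly K[9]}) (v w : 'I_9 -> K).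

Lemma zclosed_nondeg Z v : zclosed Z -> Z v -> nondeg v.
Proof. by move=> [S [_ hZ]] /hZ []. Qed.

Lemma zclosed_separate Z v : zclosed Z -> nondeg v -> ~ Z v ->
  exists p, [/\ multihom p, forall w, Z w -> p.@[w] = 0 & p.@[v] != 0].
Proof.
move=> [S [hS hZ]] nd nZv.
have [[p [Sp pv]] | none] := classic (exists p, S p /\ p.@[v] != 0).
  by exists p; split => [|w /hZ [_ ->]|] //; exact: hS.
exfalso; apply: nZv; apply/hZ; split => // p Sp.
by case: (eqVneq p.@[v] 0) => // pv; case: none; exists p.
Qed.

Lemma zclosed_in Z v : zclosed Z -> nondeg v ->
  (forall p, multihom p -> (forall w, Z w -> p.@[w] = 0) -> p.@[v] = 0) -> Z v.
Proof.
move=> hZ nd h; apply: NNPP => nZv.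
have [p [hp pZ pv]] := zclosed_separate hZ nd nZv.
by move: pv; rewrite h ?eqxx.
Qed.

Lemma zclosed_peq Z v w : zclosed Z -> Z v -> peq v w -> Z w.
Proof.
move=> hZ Zv vw; apply: (zclosed_in hZ (peq_nondeg vw (zclosed_nondeg hZ Zv))).
by move=> p hp pZ; apply/(meval_peq_eq0 vw hp)/pZ.
Qed.

Lemma zclosedU Z1 Z2 : zclosed Z1 -> zclosed Z2 -> zclosed (fun v => Z1 v \/ Z2 v).
Proof.
move=> h1 h2.
exists (fun p => exists f g, [/\ multihom f, multihom g,
   forall w, Z1 w -> f.@[w] = 0, forall w, Z2 w -> g.@[w] = 0 & p = f * g]).
split; first by move=> p [f [g [hf hg _ _ ->]]]; apply: multihomM.
move=> v; split.
  move=> Zv; split; first by case: Zv => [/(zclosed_nondeg h1)|/(zclosed_nondeg h2)].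
  move=> p [f [g [_ _ f0 g0 ->]]]; rewrite mevalM.
  by case: Zv => [/f0 ->|/g0 ->]; rewrite ?mul0r ?mulr0.
move=> [nd h]; apply: NNPP => /not_or_and [n1 n2].
have [f [hf f0 fv]] := zclosed_separate h1 nd n1.
have [g [hg g0 gv]] := zclosed_separate h2 nd n2.
have /eqP : (f * g).@[v] = 0 by apply: h; exists f, g.
by rewrite mevalM mulf_eq0 (negbTE fv) (negbTE gv).
Qed.

Lemma not_psubset S Z : ~ psubset S Z -> exists v, S v /\ ~ Z v.
Proof.
move=> nSZ; apply: NNPP => none; apply: nSZ => v Sv.
by apply: NNPP => nZv; apply: none; exists v.
Qed.

Definition zcl S : pset K := fun v =>
  nondeg v /\ forall p, multihom p -> (forall s, S s -> p.@[s] = 0) -> p.@[v] = 0.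

Lemma zcl_closed S : zclosed (zcl S).
Proof.
exists (fun p => multihom p /\ forall s, S s -> p.@[s] = 0); split; first by move=> p [].
by move=> v; split => [[nd h]|[nd h]]; split => // p; [case=> hp hs | move=> hp hs]; apply: h.
Qed.

Lemma zcl_min S Z : zclosed Z -> (forall s, S s -> Z s) -> psubset (zcl S) Z.
Proof.
move=> hZ hS v [nd h]; apply: (zclosed_in hZ nd) => p hp pZ.
by apply: h => // s /hS /pZ.
Qed.

Lemma zcl_sub S v : S v -> nondeg v -> zcl S v.
Proof. by move=> Sv nd; split => // p _; apply. Qed.

Lemma zcl_peq S s v : S s -> nondeg s -> peq s v -> zcl S v.
Proof. by move=> Ss nd; apply: zclosed_peq (zcl_closed S) (zcl_sub Ss nd). Qed.

End ZariskiClosure.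

Section PointSeparation.
Variable K : fieldType.
Implicit Types (Z : pset K) (p : {mpoly K[9]}) (q v w : 'I_9 -> K).

Lemma mhom_blk (i : 'I_9) :
  mhom (blk i == 0)%N (blk i == 1)%N (blk i == 2)%N ('X_i : {mpoly K[9]}).
Proof.
have := mhom_mcrd (K := K) (ltn_ord i); rewrite /mcrd inord_val.
by case: i => [[|[|[|[|[|[|[|[|[|//]]]]]]]]] ?].
Qed.

Lemma separate_minor q v (i j : 'I_9) : blk i = blk j -> q i * v j != q j * v i ->
  exists p, [/\ multihom p, p.@[q] = 0 & p.@[v] != 0].
Proof.
move=> bij qv; exists (q i *: 'X_j - q j *: 'X_i); split.
- have hi := mhom_blk (i := i); rewrite bij in hi.
  exact: mhom_multihom (mhomB (mhomZ (mhom_blk (i := j))) (mhomZ hi)).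
- by rewrite mevalB !mevalZ !mevalXU mulrC subrr.
- by rewrite mevalB !mevalZ !mevalXU subr_eq0.
Qed.

Lemma proportional_on (f g : nat -> K) (I : seq nat) :
  has (fun k => f k != 0) I -> has (fun k => g k != 0) I ->
  (forall i j, i \in I -> j \in I -> f i * g j = f j * g i) ->
  exists2 a, a != 0 & forall i, i \in I -> g i = a * f i.
Proof.
move=> /hasP [k kI fk] /hasP [k' k'I gk'] fg.
have E i : i \in I -> g i = g k / f k * f i.
  by move=> iI; apply: (mulfI fk); rewrite fg //; field.
exists (g k / f k) => //; apply: contraNneq gk' => gk0.
by rewrite E // gk0 mul0r.
Qed.

Lemma nondeg_blocks v : nondeg v ->
  [/\ has (fun k => crd v k != 0) [:: 0; 1]%N, has (fun k => crd v k != 0) [:: 2; 3]%N &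
      has (fun k => crd v k != 0) [:: 4; 5; 6; 7; 8]%N].
Proof. by case=> h1 h2 h3; rewrite /= !orbF. Qed.

Lemma separate_point q v : nondeg q -> nondeg v -> ~ peq q v ->
  exists p, [/\ multihom p, p.@[q] = 0 & p.@[v] != 0].
Proof.
move=> /nondeg_blocks [q1 q2 q3] /nondeg_blocks [v1 v2 v3] nqv.
apply: NNPP => nosep.
have minors (I : seq nat) :
    all (fun k => (k < 9) && ((k < 2, k < 4) == (head 0 I < 2, head 0 I < 4)))%N I ->
    forall i j, i \in I -> j \in I -> crd q i * crd v j = crd q j * crd v i.
  move=> /allP hI i j /hI /andP [hi /eqP bi] /hI /andP [hj /eqP bj].
  have [//|ne] := eqVneq (crd q i * crd v j) (crd q j * crd v i).
  case: nosep; apply: separate_minor ne.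
  by rewrite /blk !inordK //; case: bi => -> ->; case: bj => -> ->.
have [a ha Ea] := proportional_on q1 v1 (minors [:: 0; 1]%N isT).
have [b hb Eb] := proportional_on q2 v2 (minors [:: 2; 3]%N isT).
have [c hc Ec] := proportional_on q3 v3 (minors [:: 4; 5; 6; 7; 8]%N isT).
apply: nqv; apply: (peq_intro ha hb hc); by [apply: Ea | apply: Eb | apply: Ec].
Qed.

Lemma separate_points (qs : seq ('I_9 -> K)) v : nondeg v ->
  (forall q, List.In q qs -> nondeg q /\ ~ peq q v) ->
  exists p, [/\ multihom p, forall q, List.In q qs -> p.@[q] = 0 & p.@[v] != 0].
Proof.
move=> nd; elim: qs => [|q qs IH] h.
  exists 1; split => //; last by rewrite meval1 oner_eq0.
  by exists 0%N, 0%N, 0%N; apply: mhom1.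
have [f [hf f0 fv]] := IH (fun q' hq' => h q' (or_intror hq')).
have [nq nqv] := h q (or_introl erefl).
have [g [hg gq gv]] := separate_point nq nd nqv.
exists (g * f); split; [exact: multihomM | | by rewrite mevalM mulf_neq0].
by move=> q' [<-|/f0 fq']; rewrite mevalM ?gq ?fq' ?mul0r ?mulr0.
Qed.

(* Points are functions ['I_9 -> K], which carry no [eqType]: finite sets of points are
   therefore lists with membership [List.In]. *)
Lemma zcl_points (qs : seq ('I_9 -> K)) v : (forall q, List.In q qs -> nondeg q) ->
  zcl (fun w => List.In w qs) v -> exists q, List.In q qs /\ peq q v.
Proof.
move=> ndq [nd hv]; apply: NNPP => none.
have [|p [hp pq pv]] := separate_points nd (qs := qs).
  by move=> q hq; split; [exact: ndq | move=> qv; apply: none; exists q].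
by move: pv; rewrite hv ?eqxx.
Qed.

Lemma zcl_point q v : nondeg q -> zcl (fun w => List.In w [:: q]) v -> peq q v.
Proof. by move=> nq /zcl_points [q' [<-|[]]|q' [[<-|[]]]]. Qed.

Lemma zirreducible_zcl_point q : nondeg q -> zirreducible (zcl (fun w => List.In w [:: q])).
Proof.
move=> nq; have qq : zcl (fun w => List.In w [:: q]) q by apply: zcl_sub => //; left.
split; [exact: zcl_closed | by exists q |].
by move=> Z1 Z2 h1 h2 /(_ q qq) [Z1q|Z2q]; [left|right]; apply: zcl_min => // s [<-|[]].
Qed.

Lemma zirreducible_finite_cover Z (qs : seq ('I_9 -> K)) : zirreducible Z ->
  (forall q, List.In q qs -> nondeg q) ->
  (forall v, Z v -> exists q, List.In q qs /\ peq q v) ->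
  exists q, forall v, Z v -> peq q v.
Proof.
move=> hZ; elim: qs => [|q qs IH] ndq cover.
  by case: hZ => _ [v /cover [q [[] _]]] _.
have nq : nondeg q by apply: ndq; left.
have ndqs q' : List.In q' qs -> nondeg q' by move=> hq'; apply: ndq; right.
have : psubset Z (fun v => zcl (fun w => List.In w [:: q]) v \/ zcl (fun w => List.In w qs) v).
  move=> v /cover [q' [[<-|hq'] q'v]]; first by left; apply: zcl_peq q'v => //; left.
  by right; apply: zcl_peq q'v; [|exact: ndqs].
case: hZ => _ _ /(_ _ _ (zcl_closed _) (zcl_closed _)) irr /irr [Zq|Zqs].
  by exists q => v /Zq /zcl_point; apply.
by apply: IH => // v /Zqs /zcl_points; apply.
Qed.

End PointSeparation.

Section ZeroLoci.
Variable K : fieldType.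
Implicit Types (ps : seq {mpoly K[9]}) (v : 'I_9 -> K).

Definition zlocus ps : pset K := fun v => nondeg v /\ all (fun p => p.@[v] == 0) ps.

Lemma zlocus_closed ps : (forall p, p \in ps -> multihom p) -> zclosed (zlocus ps).
Proof.
move=> hps; exists (fun p => p \in ps); split => // v.
split=> [[nd /allP ps0]|[nd ps0]]; split=> //; first by move=> p /ps0 /eqP.
by apply/allP => p /ps0 ->.
Qed.

Lemma zclosed_eq (Z Z' : pset K) : peqset Z Z' -> zclosed Z' -> zclosed Z.
Proof. by move=> ZZ' [S [hS hZ']]; exists S; split => // v; rewrite ZZ'. Qed.

End ZeroLoci.

Ltac solve_multihom :=
  apply: mhom_multihom;
  repeat first [apply: mhomB | apply: mhomD | apply: mhomM | apply: mhomZ | exact: mhom_mcrd].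

Section Varieties.
Variable K : fieldType.
Implicit Types v : 'I_9 -> K.
Local Notation X := (@mcrd K).

Lemma Cset_zlocus v : Cset v <-> zlocus [:: X 8; X 4 + X 6; X 5 + X 7;
  X 0 * X 6 - X 1 * X 7; X 2 * X 6 - X 3 * X 7; X 1 * X 2 - X 0 * X 3] v.
Proof.
rewrite /Cset /zlocus /= !(mevalB, mevalD, mevalM, meval_mcrd) !subr_eq0 andbT.
split=> [[nd [[e1 e2 e3] [e4 e5 e6]]] | [nd]].
  by split=> //; rewrite e1 e2 e3 e4 e5 e6 !eqxx.
by case/and5P => /eqP e1 /eqP e2 /eqP e3 /eqP e4 /andP [/eqP e5 /eqP e6].
Qed.

Lemma Cset_closed : zclosed (Cset (K := K)).
Proof.
apply: zclosed_eq Cset_zlocus _; apply: zlocus_closed => p.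
by rewrite !inE => /or4P [| | |/or3P []] /eqP ->; solve_multihom.
Qed.

Lemma C'set_zlocus v : C'set v <-> zlocus [:: X 0 * X 4 - X 1 * X 5; X 2 * X 6 - X 3 * X 7;
  X 8 * X 8 + (X 4 + X 6) * (X 5 + X 7); X 4 - X 6; X 7 - X 5] v.
Proof.
rewrite /C'set /Xset /zlocus /= !(mevalB, mevalD, mevalM, meval_mcrd) !subr_eq0 andbT -expr2.
split=> [[[nd e1 e2 e3] e4 e5] | [nd]].
  by split=> //; rewrite e1 e2 e3 e4 e5 !eqxx.
by case/and5P => /eqP e1 /eqP e2 /eqP e3 /eqP e4 /eqP e5.
Qed.

Lemma C'set_closed : zclosed (C'set (K := K)).
Proof.
apply: zclosed_eq C'set_zlocus _; apply: zlocus_closed => p.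
by rewrite !inE => /or4P [| | |/orP []] /eqP ->; solve_multihom.
Qed.

Lemma Cset_sub_Xset : psubset (Cset (K := K)) (Xset (K := K)).
Proof.
move=> v [nd [[w0 xz yt] [e1 e2 _]]]; split=> //.
- move/eqP: xz; rewrite addr_eq0 => /eqP ->; move/eqP: yt; rewrite addr_eq0 => /eqP ->.
  by rewrite !mulrN e1.
- by rewrite w0 xz yt expr0n mul0r addr0.
Qed.

End Varieties.

Lemma mem_In (T : eqType) (x : T) (s : seq T) : x \in s -> List.In x s.
Proof. by elim: s => //= y s IH; rewrite inE => /predU1P [->|/IH]; [left|right]. Qed.

Section RationalCurves.
Variable K : numClosedFieldType.
Implicit Types (P Q : 'I_9 -> {poly K}) (f : {mpoly K[9]}) (v w : 'I_9 -> K).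

Definition param P (s : K) : 'I_9 -> K := fun i => (P i).[s].

Definition pcurve P : pset K := fun v => exists2 s, s != 0 & v = param P s.

Lemma meval_param_poly P f : exists F : {poly K}, forall s, F.[s] = f.@[param P s].
Proof.
exists (mmap (@polyC K) P f) => s.
rewrite mevalE horner_sum; apply: eq_bigr => m _.
rewrite hornerCM horner_prod; congr (_ * _).
by apply: eq_bigr => i _; rewrite horner_exp.
Qed.

Lemma poly_eq0_on_nonzero (F : {poly K}) : (forall s, s != 0 -> F.[s] = 0) -> F = 0.
Proof.
move=> F0; apply: (@roots_geq_poly_eq0 _ F [seq i.+1%:R : K | i <- iota 0 (size F)]).
- by apply/allP => _ /mapP [i _ ->]; apply/rootP/F0; rewrite pnatr_eq0.
- by rewrite map_inj_uniq ?iota_uniq // => i j /eqP; rewrite eqr_nat => /eqP [].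
- by rewrite size_map size_iota.
Qed.

Lemma meval_param_eq0 P f :
  (forall s, s != 0 -> f.@[param P s] = 0) -> forall s, f.@[param P s] = 0.
Proof.
move=> f0 s; have [F FP] := meval_param_poly P f.
by rewrite -FP (poly_eq0_on_nonzero (F := F)) ?horner0 // => t t0; rewrite FP f0.
Qed.

Lemma zirreducible_zcl_pcurve P :
  (forall s, s != 0 -> nondeg (param P s)) -> zirreducible (zcl (pcurve P)).
Proof.
move=> ndP; have inP s : s != 0 -> zcl (pcurve P) (param P s).
  by move=> s0; apply: zcl_sub; [exists s | exact: ndP].
split; [exact: zcl_closed | by exists (param P 1); apply/inP/oner_neq0 |].
move=> Z1 Z2 h1 h2 sub12; apply: NNPP => /not_or_and [n1 n2].
have [v1 [Cv1 nv1]] := not_psubset n1.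
have [v2 [Cv2 nv2]] := not_psubset n2.
have [f [hf f0 fv]] := zclosed_separate h1 Cv1.1 nv1.
have [g [hg g0 gv]] := zclosed_separate h2 Cv2.1 nv2.
have [F FP] := meval_param_poly P f; have [G GP] := meval_param_poly P g.
have /eqP : F * G = 0.
  apply: poly_eq0_on_nonzero => s s0; rewrite hornerM FP GP.
  by case: (sub12 _ (inP s s0)) => [/f0 ->|/g0 ->]; rewrite ?mul0r ?mulr0.
rewrite mulf_eq0 => /orP [/eqP F0|/eqP G0].
  by move: fv; rewrite (Cv1.2 f hf) ?eqxx // => _ [s _ ->]; rewrite -FP F0 horner0.
by move: gv; rewrite (Cv2.2 g hg) ?eqxx // => _ [s _ ->]; rewrite -GP G0 horner0.
Qed.

Section TwoCharts.
Variables (Z : pset K) (P P' : 'I_9 -> {poly K}).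
Hypothesis Z_closed : zclosed Z.
Hypothesis Z_P : forall s, Z (param P s).
Hypothesis Z_P' : forall s, Z (param P' s).
Hypothesis Z_charts : forall v, Z v -> (exists s, peq (param P s) v) \/ peq (param P' 0) v.
Hypothesis charts_glue : forall s, s != 0 -> peq (param P s) (param P' s^-1).
Hypothesis charts_ends : ~ peq (param P 0) (param P' 0).

Let nondeg_P s : nondeg (param P s) := zclosed_nondeg Z_closed (Z_P s).
Let nondeg_P' s : nondeg (param P' s) := zclosed_nondeg Z_closed (Z_P' s).

Lemma Z_charts' v : Z v -> (exists s, peq (param P' s) v) \/ peq (param P 0) v.
Proof.
case/Z_charts => [[s Ps]|P'0]; last by left; exists 0.
have [s0 | s0] := eqVneq s 0; first by right; rewrite -s0.
by left; exists s^-1; apply: peq_trans Ps; apply/peq_sym/charts_glue.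
Qed.

Lemma Z_zcl_pcurve v : Z v <-> zcl (pcurve P) v.
Proof.
split; last by apply: zcl_min => // _ [s _ ->].
move=> Zv; split=> [|f hf fP]; first exact: zclosed_nondeg Z_closed Zv.
have {}fP := meval_param_eq0 (fun s s0 => fP _ (ex_intro2 _ _ s s0 erefl)).
case: (Z_charts Zv) => [[s Ps]|P'0]; first exact/(meval_peq_eq0 Ps hf).
apply/(meval_peq_eq0 P'0 hf)/meval_param_eq0 => s s0.
have := charts_glue (invr_neq0 s0); rewrite invrK => glue.
exact/(meval_peq_eq0 glue hf).
Qed.

Lemma zirreducible_charts : zirreducible Z.
Proof.
have -> : Z = zcl (pcurve P).
  by apply: functional_extensionality => v; apply/propositional_extensionality/Z_zcl_pcurve.
by apply: zirreducible_zcl_pcurve => s _.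
Qed.

Lemma charts_point_proper : exists Z0, zirreducible Z0 /\ pproper Z0 Z.
Proof.
exists (zcl (fun w => List.In w [:: param P 0])).
split; first exact: zirreducible_zcl_point.
split; first by apply: zcl_min => // _ [<-|[]].
by exists (param P' 0); split => // /(zcl_point (nondeg_P 0)).
Qed.

Lemma zirreducible_proper_sub_point (Q : 'I_9 -> {poly K}) e (Z1 : pset K) v s0 :
  (forall s, nondeg (param Q s)) -> nondeg e ->
  (forall w, Z w -> (exists s, peq (param Q s) w) \/ peq e w) ->
  zirreducible Z1 -> psubset Z1 Z -> Z v -> ~ Z1 v -> peq (param Q s0) v ->
  exists q, forall w, Z1 w -> peq q w.
Proof.
move=> ndQ nde Z_Q irrZ1 Z1Z Zv nZ1v Qv.
have Z1_closed : zclosed Z1 by case: irrZ1.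
have [f [hf f0 fv]] := zclosed_separate Z1_closed (zclosed_nondeg Z_closed Zv) nZ1v.
have [F FQ] := meval_param_poly Q f.
have F0 : F != 0.
  apply: contraNneq fv => F0; apply/eqP/(meval_peq_eq0 Qv hf).
  by rewrite -FQ F0 horner0.
have [rs Frs] := closed_field_poly_normal F.
apply: (zirreducible_finite_cover (qs := e :: map (param Q) rs)) => //.
  by move=> _ [<-|/List.in_map_iff [s [<- _]]].
move=> w Z1w; have [[s Qw]|ew] := Z_Q w (Z1Z w Z1w); last by exists e; split => //; left.
exists (param Q s); split => //; right; apply: List.in_map.
have : root F s by apply/rootP; rewrite FQ; apply/(meval_peq_eq0 Qw hf)/f0.
by rewrite Frs rootZ ?lead_coef_eq0 // root_prod_XsubC => /mem_In.
Qed.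

Lemma irr_curve_charts : irr_curve Z.
Proof.
split; [exact: zirreducible_charts | exact: charts_point_proper |].
move=> [Z0 [Z1 [[Z0_closed [z0 Z0z0] _] irrZ1 [Z01 [w [Z1w nZ0w]]] [Z1Z [v [Zv nZ1v]]]]]].
have [q Z1q] : exists q, forall w, Z1 w -> peq q w.
  case: (Z_charts Zv) => [[s Pv]|P'v].
    exact: zirreducible_proper_sub_point nondeg_P (nondeg_P' 0) Z_charts irrZ1 Z1Z Zv nZ1v Pv.
  exact: zirreducible_proper_sub_point nondeg_P' (nondeg_P 0) Z_charts' irrZ1 Z1Z Zv nZ1v P'v.
apply: nZ0w; apply: (zclosed_peq Z0_closed Z0z0).
exact: peq_trans (peq_sym (Z1q z0 (Z01 z0 Z0z0))) (Z1q w Z1w).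
Qed.

Lemma irr_curve_sub_charts (Z' : pset K) : irr_curve Z' -> psubset Z' Z -> peqset Z' Z.
Proof.
move=> [irrZ' [Z0 [irrZ0 Z0Z']] _] Z'Z v; split; first exact: Z'Z.
move=> Zv; apply: NNPP => nZ'v; case: irr_curve_charts => _ _; apply.
by exists Z0, Z'; split => //; split => //; exists v.
Qed.

End TwoCharts.

End RationalCurves.

Section GroupAction.
Variable K : fieldType.
Implicit Types (g : ('I_9 -> K) -> 'I_9 -> K) (v : 'I_9 -> K) (Z : pset K).

Lemma crd_tau1 v k : (k < 9)%N ->
  crd (tau1 v) k = crd v (nth 0%N [:: 1; 0; 3; 2; 5; 4; 7; 6; 8]%N k).
Proof. by move=> hk; rewrite {1}/crd /tau1 /permute inordK. Qed.

Lemma crd_tau2 v k : (k < 9)%N ->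
  crd (tau2 v) k = crd v (nth 0%N [:: 2; 3; 0; 1; 6; 7; 4; 5; 8]%N k).
Proof. by move=> hk; rewrite {1}/crd /tau2 /permute inordK. Qed.

Lemma crd_tau3 v k : (k < 9)%N -> crd (tau3 v) k = if k == 8%N then - crd v k else crd v k.
Proof. by move=> hk; rewrite {1}/crd /tau3 /= inordK. Qed.

Lemma crd_gamma l v k : (k < 9)%N ->
  crd (gamma l v) k = nth 0 [:: l^-1; l; l^-1; l; l; l^-1; l; l^-1; 1] k * crd v k.
Proof. by move=> hk; rewrite {1}/crd /gamma inordK. Qed.

Lemma generator_gamma (l : K) : l != 0 -> generator (gamma l).
Proof. by move=> l0; apply: Or44; exists l. Qed.

Lemma generator_tau1 : generator (tau1 (K := K)).
Proof. exact: Or41. Qed.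

Lemma generator_tau2 : generator (tau2 (K := K)).
Proof. exact: Or42. Qed.

Lemma generator_nondeg g v : generator g -> nondeg v -> nondeg (g v).
Proof.
case=> [->|->|->|[l l0 ->]] [nd1 nd2 nd3];
  rewrite /nondeg ?crd_tau1 ?crd_tau2 ?crd_tau3 ?crd_gamma //=.
- split; [by rewrite orbC | by rewrite orbC | move: nd3].
  by case: (crd v 4 != 0); case: (crd v 5 != 0); case: (crd v 6 != 0); case: (crd v 7 != 0).
- split => //; move: nd3.
  by case: (crd v 4 != 0); case: (crd v 5 != 0); case: (crd v 6 != 0); case: (crd v 7 != 0).
- by rewrite oppr_eq0.
- by rewrite !mulf_eq0 !invr_eq0 (negbTE l0) oner_eq0.
Qed.

Lemma inG_nondeg g v : inG g -> nondeg v -> nondeg (g v).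
Proof.
move=> hg; elim: hg v => [//|{}g /generator_nondeg //|g1 g2 _ IH1 _ IH2 v nd].
exact/IH1/IH2.
Qed.

Lemma G_invariant_generators Z :
  (forall g, generator g -> forall v, nondeg v -> Z (g v) <-> Z v) -> G_invariant Z.
Proof.
move=> Zgen g hg; elim: hg => [//|{}g /Zgen //|g1 g2 _ IH1 hg2 IH2 v nd].
by rewrite /= IH1 ?IH2 //; exact: inG_nondeg.
Qed.

Lemma eq_scaled (k a b c d : K) : c = d -> a - b = k * (c - d) -> a = b.
Proof. by move=> -> e; apply/eqP; rewrite -subr_eq0 e subrr mulr0. Qed.

(* Each generator maps a defining equation of X, C or C' to a multiple, by 1, -1, l or 1/l,
   of another one. *)
Ltac scaled_eq :=
  match goal with H : _ = _ |- _ = _ =>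
    first [ apply: (eq_scaled (k := 1) H); by field
          | apply: (eq_scaled (k := -1) H); by field
          | match goal with _ : is_true (~~ (?l == _)) |- _ =>
              first [ apply: (eq_scaled (k := l) H); by field
                    | apply: (eq_scaled (k := l^-1) H); by field ] end ] end.

Lemma Xset_generator g v : generator g -> nondeg v -> Xset (g v) <-> Xset v.
Proof.
move=> hg nd; have ndg := generator_nondeg hg nd.
case: hg ndg => [->|->|->|[l l0 ->]] ndg;
  rewrite /Xset ?crd_tau1 ?crd_tau2 ?crd_tau3 ?crd_gamma //=;
  by split=> -[_ e1 e2 e3]; split=> //; scaled_eq.
Qed.

Lemma Cset_generator g v : generator g -> nondeg v -> Cset (g v) <-> Cset v.
Proof.
move=> hg nd; have ndg := generator_nondeg hg nd.
case: hg ndg => [->|->|->|[l l0 ->]] ndg;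
  rewrite /Cset ?crd_tau1 ?crd_tau2 ?crd_tau3 ?crd_gamma //=;
  split=> -[_ [[e1 e2 e3] [e4 e5 e6]]]; do !split=> //; try by scaled_eq.
(* tau2 exchanges u1 z = v1 t and u2 z = v2 t only modulo x = -z and y = -t. *)
all: have hx : crd v 4 = - crd v 6 by scaled_eq.
all: have hy : crd v 5 = - crd v 7 by scaled_eq.
all: by rewrite ?hx ?hy in e4 e5 *; scaled_eq.
Qed.

Lemma C'set_generator g v : generator g -> nondeg v -> C'set (g v) <-> C'set v.
Proof.
move=> hg nd; have Xg := Xset_generator hg nd.
case: hg Xg => [->|->|->|[l l0 ->]] Xg;
  rewrite /C'set ?crd_tau1 ?crd_tau2 ?crd_tau3 ?crd_gamma //=;
  by split=> -[/Xg Xv e1 e2]; split=> //; scaled_eq.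
Qed.

Lemma Cset_invariant : G_invariant (Cset (K := K)).
Proof. by apply: G_invariant_generators => g /Cset_generator. Qed.

Lemma C'set_invariant : G_invariant (C'set (K := K)).
Proof. by apply: G_invariant_generators => g /C'set_generator. Qed.

End GroupAction.

Section Curves.
Variable K : numClosedFieldType.
Implicit Types v : 'I_9 -> K.

Definition horner_chart := (hornerC, hornerN, hornerZ, hornerXn, hornerX, horner0).

Definition plist (ps : seq {poly K}) : 'I_9 -> {poly K} := fun i => nth 0 ps i.

Lemma crd_param ps s k : (k < 9)%N -> crd (param (plist ps) s) k = (nth 0 ps k).[s].
Proof. by move=> hk; rewrite /crd /param /plist inordK. Qed.

Definition chartC := plist [:: 1%:P; 'X; 1%:P; 'X; -'X; -1%:P; 'X; 1%:P; 0].
Definition chartC_inf := plist [:: 'X; 1%:P; 'X; 1%:P; -1%:P; -'X; 1%:P; 'X; 0].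

Lemma Cset_chartC s : Cset (param chartC s).
Proof.
rewrite /Cset /nondeg !crd_param //= !horner_chart.
by do !split; rewrite ?oppr_eq0 ?oner_eq0 /= ?orbT //; ring.
Qed.

Lemma Cset_chartC_inf s : Cset (param chartC_inf s).
Proof.
rewrite /Cset /nondeg !crd_param //= !horner_chart.
by do !split; rewrite ?oppr_eq0 ?oner_eq0 /= ?orbT //; ring.
Qed.

Lemma Cset_charts v :
  Cset v -> (exists s, peq (param chartC s) v) \/ peq (param chartC_inf 0) v.
Proof.
move=> [[n1 n2 n3] [[w0 xz yt] [e4 e5 e6]]].
have hx : crd v 4 = - crd v 6 by apply/eqP; rewrite -addr_eq0 xz.
have hy : crd v 5 = - crd v 7 by apply/eqP; rewrite -addr_eq0 yt.
have [t0|t0] := eqVneq (crd v 7) 0.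
- right; have z0 : crd v 6 != 0.
    by apply: contraTneq n3 => z0; rewrite hx hy z0 t0 w0 oppr0 eqxx.
  have u10 : crd v 0 = 0 by apply: (mulIf z0); rewrite e4 t0 mulr0 mul0r.
  have u20 : crd v 2 = 0 by apply: (mulIf z0); rewrite e5 t0 mulr0 mul0r.
  have v1 : crd v 1 != 0 by move: n1; rewrite u10 eqxx.
  have v2 : crd v 3 != 0 by move: n2; rewrite u20 eqxx.
  apply: (peq_intro v1 v2 z0); rewrite /chartC_inf !crd_param //= !horner_chart;
    by rewrite ?u10 ?u20 ?hx ?hy ?t0 ?w0; ring.
- left; exists (crd v 6 / crd v 7).
  have u1 : crd v 0 != 0.
    apply: contraTneq n1 => u10; have v10 : crd v 1 = 0.
      by apply: (mulIf t0); rewrite -e4 u10 !mul0r.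
    by rewrite u10 v10 eqxx.
  have u2 : crd v 2 != 0.
    apply: contraTneq n2 => u20; have v20 : crd v 3 = 0.
      by apply: (mulIf t0); rewrite -e5 u20 !mul0r.
    by rewrite u20 v20 eqxx.
  apply: (peq_intro u1 u2 t0); rewrite /chartC !crd_param //= !horner_chart.
  + by rewrite mulr1.
  + by rewrite mulrA e4 mulfK.
  + by rewrite mulr1.
  + by rewrite mulrA e5 mulfK.
  + by rewrite hx; field.
  + by rewrite hy; ring.
  + by field.
  + by rewrite mulr1.
  + by rewrite w0 mulr0.
Qed.

Lemma chartC_glue s : s != 0 -> peq (param chartC s) (param chartC_inf s^-1).
Proof.
move=> s0; apply: (peq_intro (invr_neq0 s0) (invr_neq0 s0) (invr_neq0 s0));
  rewrite /chartC /chartC_inf !crd_param //= !horner_chart; by field.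
Qed.

Lemma chartC_ends : ~ peq (param chartC 0) (param chartC_inf 0).
Proof.
case/peq_scales => a [b [c [a0 _ _ /(_ 0%N isT)]]].
rewrite /chartC /chartC_inf !crd_param //= !horner_chart mulr1 => /esym a_eq0.
by rewrite a_eq0 eqxx in a0.
Qed.

Lemma irr_curve_Cset : irr_curve (Cset (K := K)).
Proof.
exact: (irr_curve_charts (P := chartC) (P' := chartC_inf) (Cset_closed K)
  Cset_chartC Cset_chartC_inf Cset_charts chartC_glue chartC_ends).
Qed.

Lemma irr_curve_sub_Cset Z :
  irr_curve Z -> psubset Z (Cset (K := K)) -> peqset Z (Cset (K := K)).
Proof.
exact: (irr_curve_sub_charts (P := chartC) (P' := chartC_inf) (Cset_closed K)
  Cset_chartC Cset_chartC_inf Cset_charts chartC_glue chartC_ends).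
Qed.

(* On C' one has w^2 = -4xy, so C' is x = s^2 y, w = 2i s y. *)
Definition chartC' := plist [:: 1%:P; 'X^2; 1%:P; 'X^2; 'X^2; 1%:P; 'X^2; 1%:P; ('i * 2) *: 'X].
Definition chartC'_inf := plist [:: 'X^2; 1%:P; 'X^2; 1%:P; 1%:P; 'X^2; 1%:P; 'X^2; ('i * 2) *: 'X].

Lemma sqr_i2 (s : K) : ('i * 2 * s) ^+ 2 = - 4 * s ^+ 2.
Proof. by rewrite !exprMn sqrCi; ring. Qed.

Lemma C'set_chartC' s : C'set (param chartC' s).
Proof.
rewrite /C'set /Xset /nondeg !crd_param //= !horner_chart sqr_i2.
by do !split; rewrite ?oner_eq0 /= ?orbT //; ring.
Qed.

Lemma C'set_chartC'_inf s : C'set (param chartC'_inf s).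
Proof.
rewrite /C'set /Xset /nondeg !crd_param //= !horner_chart sqr_i2.
by do !split; rewrite ?oner_eq0 /= ?orbT //; ring.
Qed.

Lemma C'set_charts v :
  C'set v -> (exists s, peq (param chartC' s) v) \/ peq (param chartC'_inf 0) v.
Proof.
move=> [[[n1 n2 n3] e1 e2 e3] zx ty]; rewrite -zx ty in e2 n3 e3.
have w2 : crd v 8 ^+ 2 = - 4 * (crd v 4 * crd v 5).
  by apply/eqP; rewrite -subr_eq0 -e3; apply/eqP; ring.
have [y0|y0] := eqVneq (crd v 5) 0.
- right; have w0 : crd v 8 = 0.
    by apply/eqP; move: w2; rewrite y0 !mulr0 => /eqP; rewrite expf_eq0.
  have x0 : crd v 4 != 0 by apply: contraTneq n3 => x0; rewrite x0 y0 w0 eqxx.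
  have u10 : crd v 0 = 0 by apply: (mulIf x0); rewrite e1 y0 !mul0r mulr0.
  have u20 : crd v 2 = 0 by apply: (mulIf x0); rewrite e2 y0 !mul0r mulr0.
  have v1 : crd v 1 != 0 by move: n1; rewrite u10 eqxx.
  have v2 : crd v 3 != 0 by move: n2; rewrite u20 eqxx.
  apply: (peq_intro v1 v2 x0); rewrite /chartC'_inf !crd_param //= !horner_chart;
    by rewrite ?u10 ?u20 -?zx ?ty ?y0 ?w0 ?expr0n /=; ring.
- left; have u1 : crd v 0 != 0.
    apply: contraTneq n1 => u10; have v10 : crd v 1 = 0.
      by apply: (mulIf y0); rewrite -e1 u10 !mul0r.
    by rewrite u10 v10 eqxx.
  have u2 : crd v 2 != 0.
    apply: contraTneq n2 => u20; have v20 : crd v 3 = 0.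
      by apply: (mulIf y0); rewrite -e2 u20 !mul0r.
    by rewrite u20 v20 eqxx.
  pose s := crd v 8 / ('i * 2 * crd v 5).
  have s2 : s ^+ 2 = crd v 4 / crd v 5.
    by rewrite expr_div_n w2 sqr_i2; field.
  exists s; apply: (peq_intro u1 u2 y0);
    rewrite /chartC' !crd_param //= !horner_chart ?s2.
  + by rewrite mulr1.
  + by rewrite mulrA e1 mulfK.
  + by rewrite mulr1.
  + by rewrite mulrA e2 mulfK.
  + by field.
  + by rewrite mulr1.
  + by rewrite -zx; field.
  + by rewrite mulr1 ty.
  + by rewrite /s; field; rewrite y0 neq0Ci.
Qed.

Lemma chartC'_glue s : s != 0 -> peq (param chartC' s) (param chartC'_inf s^-1).
Proof.
move=> s0; have s2 : s ^- 2 != 0 by rewrite invr_eq0 expf_neq0.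
apply: (peq_intro s2 s2 s2); rewrite /chartC' /chartC'_inf !crd_param //= !horner_chart;
  by field.
Qed.

Lemma chartC'_ends : ~ peq (param chartC' 0) (param chartC'_inf 0).
Proof.
case/peq_scales => a [b [c [a0 _ _ /(_ 0%N isT)]]].
rewrite /chartC' /chartC'_inf !crd_param //= !horner_chart expr0n mulr1 => /esym a_eq0.
by rewrite a_eq0 eqxx in a0.
Qed.

Lemma irr_curve_C'set : irr_curve (C'set (K := K)).
Proof.
exact: (irr_curve_charts (P := chartC') (P' := chartC'_inf) (C'set_closed K)
  C'set_chartC' C'set_chartC'_inf C'set_charts chartC'_glue chartC'_ends).
Qed.

Lemma irr_curve_sub_C'set Z :
  irr_curve Z -> psubset Z (C'set (K := K)) -> peqset Z (C'set (K := K)).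
Proof.
exact: (irr_curve_sub_charts (P := chartC') (P' := chartC'_inf) (C'set_closed K)
  C'set_chartC' C'set_chartC'_inf C'set_charts chartC'_glue chartC'_ends).
Qed.

End Curves.

Lemma no_G_fixed_point (K : numFieldType) (v : 'I_9 -> K) : ~ G_fixed_point v.
Proof.
have two0 : (2 : K) != 0 by rewrite pnatr_eq0.
move=> [[[nd1 _ _] _ _ _] fixed].
have /peq_scales [a [b [c [_ _ _ gam]]]] := fixed _ (inG_gen (generator_gamma two0)).
have /peq_scales [a' [b' [c' [_ _ _ tau]]]] := fixed _ (inG_gen (generator_tau1 K)).
move: (gam 0%N isT) (gam 1%N isT) (tau 0%N isT) (tau 1%N isT).
rewrite !crd_gamma // !crd_tau1 //= => g0 g1 t0 t1.
have [u0|u0] := eqVneq (crd v 0) 0; first by move: nd1; rewrite u0 t0 u0 mulr0 eqxx.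
have [v0|v0] := eqVneq (crd v 1) 0; first by move: nd1; rewrite v0 t1 v0 mulr0 eqxx.
have a_half : a = 2^-1 by apply: (mulIf u0); rewrite -g0.
have a_two : a = 2 by apply: (mulIf v0); rewrite -g1.
have /eqP : (2 * 2 : K) = 1 by rewrite -{1}a_two a_half mulVf.
by rewrite -natrM pnatr_eq1.
Qed.

Section Classification.
Variable K : numClosedFieldType.
Implicit Types (p v w : 'I_9 -> K) (Z : pset K).

(* The Gamma-orbit of [p], rescaled blockwise by [l] so that it is polynomial in [l]. *)
Definition orbit_param p : 'I_9 -> {poly K} :=
  plist [:: (crd p 0)%:P; crd p 1 *: 'X^2; (crd p 2)%:P; crd p 3 *: 'X^2;
            crd p 4 *: 'X^2; (crd p 5)%:P; crd p 6 *: 'X^2; (crd p 7)%:P; crd p 8 *: 'X].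

Lemma gamma_orbit_param p l : l != 0 -> peq (gamma l p) (param (orbit_param p) l).
Proof.
move=> l0; apply: (peq_intro l0 l0 l0);
  rewrite !crd_param // !crd_gamma //= !horner_chart; by field.
Qed.

Lemma orbit_param1 p : peq (param (orbit_param p) 1) p.
Proof.
apply: (peq_intro (oner_neq0 K) (oner_neq0 K) (oner_neq0 K));
  by rewrite !crd_param //= !horner_chart ?expr1n ?mulr1 ?mul1r.
Qed.

Lemma zcl_orbit_sub Z p : zclosed Z -> (forall l, l != 0 -> Z (gamma l p)) ->
  psubset (zcl (pcurve (orbit_param p))) Z.
Proof.
move=> hZ Zp; apply: zcl_min => // _ [l l0 ->].
exact: zclosed_peq (Zp l l0) (gamma_orbit_param p l0).
Qed.

Lemma zcl_orbit_line p w : zcl (pcurve (orbit_param p)) w ->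
  crd p 6 * crd w 4 = crd p 4 * crd w 6.
Proof.
move=> [_ /(_ (crd p 6 *: mcrd K 4 - crd p 4 *: mcrd K 6))].
rewrite mevalB !mevalZ !meval_mcrd => line; apply/eqP; rewrite -subr_eq0 line //.
  by solve_multihom.
move=> _ [l _ ->]; rewrite mevalB !mevalZ !meval_mcrd !crd_param //=.
by rewrite !horner_chart; ring.
Qed.

Lemma C_or_C'_of_tau_line p : Xset p -> crd p 1 != 0 -> crd p 3 != 0 ->
  crd p 6 * crd (tau1 p) 4 = crd p 4 * crd (tau1 p) 6 ->
  crd p 6 * crd (tau2 p) 4 = crd p 4 * crd (tau2 p) 6 -> Cset p \/ C'set p.
Proof.
move=> [nd e1 e2 e3] v1 v2; rewrite !crd_tau1 // !crd_tau2 //= => yt zx.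
have [z_x|z_nx] := eqVneq (crd p 6) (crd p 4).
- right; split=> //; have [x0|x0] := eqVneq (crd p 4) 0.
    have y0 : crd p 5 = 0 by apply: (mulfI v1); rewrite -e1 x0 !mulr0.
    have t0 : crd p 7 = 0 by apply: (mulfI v2); rewrite -e2 z_x x0 !mulr0.
    by rewrite y0 t0.
  by apply: (mulfI x0); rewrite -yt z_x.
- left; have z_mx : crd p 6 = - crd p 4.
    have : (crd p 6 - crd p 4) * (crd p 6 + crd p 4) = 0 by rewrite mulrDr !mulrBl zx; ring.
    move/eqP; rewrite mulf_eq0 subr_eq0 (negbTE z_nx) /= addr_eq0.
    by move/eqP.
  have x0 : crd p 4 != 0 by apply: contraNneq z_nx => x0; rewrite z_mx x0 oppr0.
  have z0 : crd p 6 != 0 by rewrite z_mx oppr_eq0.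
  have t_my : crd p 7 = - crd p 5.
    by apply: (mulfI x0); move: yt; rewrite z_mx mulNr => <-; ring.
  have w0 : crd p 8 = 0.
    by apply/eqP; move: e3; rewrite z_mx t_my addrN mul0r addr0 => /eqP; rewrite expf_eq0.
  have e4 : crd p 0 * crd p 6 = crd p 1 * crd p 7 by rewrite z_mx t_my !mulrN e1.
  split=> //; split; first by rewrite w0 z_mx t_my !addrN.
  split=> //; apply: (mulIf z0).
  by rewrite -mulrA e2 mulrCA -e4; ring.
Qed.

Section InvariantCurve.
Variable Z : pset K.
Hypotheses (Z_curve : irr_curve Z) (Z_X : psubset Z (Xset (K := K))) (Z_G : G_invariant Z).

Let Z_closed : zclosed Z. Proof. by case: Z_curve => -[]. Qed.

Lemma Z_generator g p : generator g -> Z p -> Z (g p).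
Proof. by move=> hg Zp; apply/(Z_G (inG_gen hg) (zclosed_nondeg Z_closed Zp)). Qed.

Lemma Z_point_uv_nonzero :
  exists p, [/\ Z p, crd p 0 != 0, crd p 1 != 0, crd p 2 != 0 & crd p 3 != 0].
Proof.
pose V k := zlocus [:: mcrd K k].
have V_closed k : (k < 9)%N -> zclosed (V k).
  by move=> hk; apply: zlocus_closed => q; rewrite inE => /eqP ->; solve_multihom.
have Z_notin_V k : (k < 4)%N -> ~ psubset Z (V k).
  move=> hk ZV; case: Z_curve => -[_ [p Zp] _] _ _.
  have [[nd1 nd2 _] /= /andP [/eqP pk _]] := ZV p Zp.
  have [_ /= /andP [/eqP tpk _]] := ZV _ (Z_generator (generator_tau1 K) Zp).
  move: tpk; rewrite !meval_mcrd crd_tau1 ?(ltn_trans hk) // in pk *.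
  case: k hk pk {ZV} => [|[|[|[|//]]]] _ /= pk tpk;
    [move: nd1 | move: nd1 | move: nd2 | move: nd2]; by rewrite pk tpk eqxx.
apply: NNPP => none; case: Z_curve => -[_ _ irr] _ _.
have cover : psubset Z (fun v => V 0%N v \/ V 1%N v \/ V 2%N v \/ V 3%N v).
  move=> v Zv; rewrite /V /zlocus /= !meval_mcrd !andbT.
  have nd := zclosed_nondeg Z_closed Zv.
  have [u10|u1] := eqVneq (crd v 0) 0; first by left.
  have [v10|v1] := eqVneq (crd v 1) 0; first by right; left.
  have [u20|u2] := eqVneq (crd v 2) 0; first by right; right; left.
  have [v20|v2] := eqVneq (crd v 3) 0; first by right; right; right.
  by case: none; exists v.
have V23_closed : zclosed (fun v => V 2%N v \/ V 3%N v) by apply: zclosedU; apply: V_closed.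
have V123_closed : zclosed (fun v => V 1%N v \/ V 2%N v \/ V 3%N v).
  by apply: zclosedU; [apply: V_closed | exact: V23_closed].
case: (irr _ _ (V_closed 0%N isT) V123_closed cover) =>
  [|/(irr _ _ (V_closed 1%N isT) V23_closed)
    [|/(irr _ _ (V_closed 2%N isT) (V_closed 3%N isT)) []]];
  exact: Z_notin_V.
Qed.

Lemma Z_sub_zcl_orbit p : Z p -> crd p 0 != 0 -> crd p 1 != 0 ->
  psubset Z (zcl (pcurve (orbit_param p))).
Proof.
move=> Zp u1 v1; set O := zcl (pcurve (orbit_param p)).
have Z_orbit l : l != 0 -> Z (param (orbit_param p) l).
  move=> l0; have Z_gamma := Z_generator (generator_gamma l0) Zp.
  exact: zclosed_peq Z_closed Z_gamma (gamma_orbit_param p l0).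
have nd_orbit l : l != 0 -> nondeg (param (orbit_param p) l).
  by move=> l0; apply: zclosed_nondeg Z_closed (Z_orbit l l0).
have O_p : O p.
  apply: (zcl_peq _ (nd_orbit 1 (oner_neq0 K)) (orbit_param1 p)).
  by exists 1; rewrite ?oner_neq0.
have two0 : (2 : K) != 0 by rewrite pnatr_eq0.
have O_2 : O (param (orbit_param p) 2) by apply: zcl_sub (nd_orbit 2 two0); exists 2.
have not_p_2 : ~ peq p (param (orbit_param p) 2).
  case/peq_scales => a [b [c [_ _ _ h]]]; move: (h 0%N isT) (h 1%N isT).
  rewrite !crd_param //= !horner_chart => h0.
  have -> : a = 1 by apply: (mulIf u1); rewrite -h0 mul1r.
  move/eqP; rewrite mul1r -subr_eq0.
  have -> : crd p 1 * 2 ^+ 2 - crd p 1 = crd p 1 * 3%:R by ring.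
  by rewrite mulf_eq0 (negbTE v1) pnatr_eq0.
(* Otherwise p, O and Z would form a chain of length two in the curve Z. *)
move=> v Zv; apply: NNPP => nOv; case: Z_curve => _ _; apply.
exists (zcl (fun w => List.In w [:: p])), O; split.
- exact: zirreducible_zcl_point (zclosed_nondeg Z_closed Zp).
- by apply: zirreducible_zcl_pcurve.
- split; first by apply: zcl_min; [exact: zcl_closed | move=> _ [<-|[]]].
  by exists (param (orbit_param p) 2); split=> // /(zcl_point (zclosed_nondeg Z_closed Zp)).
- split; last by exists v.
  by apply: zcl_orbit_sub => // l l0; apply/Z_generator/Zp/generator_gamma.
Qed.

Lemma invariant_curve_C_or_C' : peqset Z (Cset (K := K)) \/ peqset Z (C'set (K := K)).
Proof.
have [p [Zp u1 v1 _ v2]] := Z_point_uv_nonzero.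
have Z_O := Z_sub_zcl_orbit Zp u1 v1.
have O_sub (W : pset K) : zclosed W -> G_invariant W -> W p -> psubset Z W.
  move=> W_closed W_G Wp w /Z_O; apply: zcl_orbit_sub => // l l0.
  exact/(W_G _ (inG_gen (generator_gamma l0)) _ (zclosed_nondeg W_closed Wp)).
have xz1 := zcl_orbit_line (Z_O _ (Z_generator (generator_tau1 K) Zp)).
have xz2 := zcl_orbit_line (Z_O _ (Z_generator (generator_tau2 K) Zp)).
case: (C_or_C'_of_tau_line (Z_X Zp) v1 v2 xz1 xz2) => [Cp|C'p]; [left|right].
  apply: irr_curve_sub_Cset => //.
  by apply: (O_sub _ _ _ Cp); [exact: Cset_closed | exact: Cset_invariant].
apply: irr_curve_sub_C'set => //.
by apply: (O_sub _ _ _ C'p); [exact: C'set_closed | exact: C'set_invariant].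
Qed.

End InvariantCurve.

End Classification.

Theorem lemma4p16 (R : realType) :
  (~ exists v : 'I_9 -> R[i], G_fixed_point v) /\
  (forall Z : pset R[i],
     (irr_curve Z /\ psubset Z (Xset (K:=R[i])) /\ G_invariant Z) <->
     (peqset Z (Cset (K:=R[i])) \/ peqset Z (C'set (K:=R[i])))).
Proof.
split; first by case=> v; apply: no_G_fixed_point.
move=> Z; split; first by case=> Z_curve [Z_X Z_G]; apply: invariant_curve_C_or_C'.
have eq_pset (W : pset R[i]) : peqset Z W -> Z = W.
  by move=> ZW; apply: functional_extensionality => v; apply: propositional_extensionality.
case=> /eq_pset ->.
  by split; [exact: irr_curve_Cset | split; [exact: Cset_sub_Xset | exact: Cset_invariant]].
by split; [exact: irr_curve_C'set | split; [by move=> v [] | exact: C'set_invariant]].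
Qed.
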